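(* For twisted knot diagrams $K$ with an odd number of bars, each integer $a_n(K)$ ($n\in\mathbb{Z}$), equivalently the polynomial $T_o(K)=\sum_{n\in\mathbb{Z}}a_n(K)t^n$, is invariant under generalized Reidemeister moves and twisted Reidemeister moves, hence is a twisted knot invariant.
   Context: A twisted knot diagram is a virtual knot diagram with finitely many bars on its edges; twisted knots are equivalence classes under the generalized Reidemeister moves and the twisted moves $\Omega_1^t$ (a bar passes through a virtual crossing), $\Omega_2^t$ (two adjacent bars cancel), $\Omega_3^t$ (a real crossing is replaced by the crossing with over/under exchanged and a bar added on each of its four adjacent semiarcs); the parity of the number of bars is preserved. Segments are the pieces between real crossings and bars. A coloring by $(\mathbb{Z}, a\ast b=a\circ b=a+1, f(a)=-a)$ labels segments by integers so that at each real crossing, with $x$ the label of the under-strand segment to the right of the over-strand and $y$ the label of the over-strand segment to the right of the under-strand (right with respect to strand orientations), the other under-segment is labeled $x+1$ and the other over-segment $y+1$, and labels on the two sides of a bar are negatives of each other. When the number of bars is odd this coloring exists and is unique; the index of a real crossing $c$ is then $\mathrm{Ind}(c)=y-x$. With $w(c)$ the writhe and $w(K)=\sum_c w(c)$: $a_n(K)=\sum_{\mathrm{Ind}(c)=n}w(c)$ for $n\neq0$ and $a_0(K)=\sum_{\mathrm{Ind}(c)=0}w(c)-w(K)$. *)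

From Stdlib Require Import ZArith List Bool Arith ClassicalEpsilon Relations.
Import ListNotations.
Open Scope Z_scope.

(* A twisted knot diagram, up to virtual moves and Omega_1^t, is encoded by
   its cyclic Gauss word: the sequence of events met when travelling along
   the (oriented) knot: a bar, passing OVER real crossing c, or passing UNDER
   real crossing c.  The crossing signs (writhes) are given by [pos]:
   [pos c = true] iff crossing c is positive.  Virtual crossings are
   invisible in this encoding. *)
Inductive event : Type := Bar | Over (c : nat) | Under (c : nat).

Definition event_eqb (e f : event) : bool :=
  match e, f with
  | Bar, Bar => true
  | Over a, Over b => Nat.eqb a b
  | Under a, Under b => Nat.eqb a b
  | _, _ => false
  end.

Record diagram : Type := mkD { word : list event; pos : nat -> bool }.

Definition overs (w : list event) : list nat :=
  flat_map (fun e => match e with Over c => [c] | _ => [] end) w.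
Definition unders (w : list event) : list nat :=
  flat_map (fun e => match e with Under c => [c] | _ => [] end) w.

Definition wf (D : diagram) : Prop :=
  NoDup (overs (word D)) /\ NoDup (unders (word D)) /\
  (forall c, In c (overs (word D)) <-> In c (unders (word D))).

Definition nbars (D : diagram) : nat :=
  length (filter (fun e => match e with Bar => true | _ => false end) (word D)).

Definition wr (D : diagram) (c : nat) : Z := if pos D c then 1 else -1.
Definition writhe (D : diagram) : Z :=
  fold_right Z.add 0 (map (wr D) (overs (word D))).

(* Segments: with L = length of the word, segment k (k < L) is the piece of
   the knot between event k and event (k+1 mod L).  The segment just before
   event k is [prevseg L k]. *)
Definition prevseg (L k : nat) : nat := ((k + L - 1) mod L)%nat.

Definition nth_ev (w : list event) (k : nat) : event := nth k w Bar.

(* Colorings by (Z, a*b = a o b = a+1, f(a) = -a).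
   At a positive crossing (over strand SW->NE, under strand SE->NW) the
   under-segment to the right of the over-strand is the incoming under
   segment, and the over-segment to the right of the under-strand is the
   outgoing over segment; at a negative crossing it is the opposite. *)
Definition is_coloring (D : diagram) (col : nat -> Z) : Prop :=
  let w := word D in
  let L := length w in
  (forall k, (k < L)%nat -> nth_ev w k = Bar -> col (prevseg L k) = - col k) /\
  (forall c i j, (i < L)%nat -> (j < L)%nat ->
     nth_ev w i = Over c -> nth_ev w j = Under c ->
     if pos D c
     then col j = col (prevseg L j) + 1 /\ col (prevseg L i) = col i + 1
     else col (prevseg L j) = col j + 1 /\ col i = col (prevseg L i) + 1).

(* "the" coloring (it exists and is unique when the number of bars is odd) *)
Definition the_coloring (D : diagram) : nat -> Z :=
  epsilon (inhabits (fun _ : nat => 0)) (is_coloring D).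

Fixpoint idx (e : event) (w : list event) : nat :=
  match w with
  | [] => 0%nat
  | x :: t => if event_eqb x e then 0%nat else S (idx e t)
  end.

Definition Ind (D : diagram) (c : nat) : Z :=
  let w := word D in
  let L := length w in
  let col := the_coloring D in
  let i := idx (Over c) w in
  let j := idx (Under c) w in
  if pos D c then col i - col (prevseg L j)
  else col (prevseg L i) - col j.

Definition a_ (D : diagram) (n : Z) : Z :=
  fold_right Z.add 0
    (map (fun c => if Z.eqb (Ind D c) n then wr D c else 0) (overs (word D)))
  - (if Z.eqb n 0 then writhe D else 0).

Definition lt_ev (o : bool) (c : nat) : event := if o then Over c else Under c.
Definition zsg (b : bool) : Z := if b then 1 else -1.
Definition pr (first : bool) (x y : event) : list event :=
  if first then [x; y] else [y; x].

Definition rename (f : nat -> nat) (e : event) : event :=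
  match e with Bar => Bar | Over c => Over (f c) | Under c => Under (f c) end.

(* Data of an R3 configuration: strands 1,2,3 with crossings a = 1/2,
   b = 1/3, c = 2/3; [oa] : strand 1 is over at a, [ob] : strand 1 over at b,
   [oc] : strand 2 over at c (heights must be a linear order).  With
   o_ij = sign det(d_i, d_j) (= writhe of the crossing if strand i is over,
   its opposite otherwise) and a side bit sg, the order of the two crossings
   along each strand is:
     strand 1: a before b  iff sg = - o13
     strand 2: a before c  iff sg = - o23
     strand 3: b before c  iff sg = - o12 o13 o23.
   R3 flips sg, i.e. reverses the three pairs. *)
Definition o12 (s : nat -> bool) (a : nat) (oa : bool) : Z :=
  if oa then zsg (s a) else - zsg (s a).

Definition strand1 (s : nat -> bool) (a b c : nat) (oa ob oc : bool) (sg : Z) : list event :=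
  pr (Z.eqb sg (- o12 s b ob)) (lt_ev oa a) (lt_ev ob b).
Definition strand2 (s : nat -> bool) (a b c : nat) (oa ob oc : bool) (sg : Z) : list event :=
  pr (Z.eqb sg (- o12 s c oc)) (lt_ev (negb oa) a) (lt_ev oc c).
Definition strand3 (s : nat -> bool) (a b c : nat) (oa ob oc : bool) (sg : Z) : list event :=
  pr (Z.eqb sg (- (o12 s a oa * o12 s b ob * o12 s c oc)))
     (lt_ev (negb ob) b) (lt_ev (negb oc) c).

Definition heights_ok (oa ob oc : bool) : Prop :=
  ~ (oa = oc /\ ob = negb oa).

Inductive step : diagram -> diagram -> Prop :=
  (* the Gauss word is cyclic *)
  | st_rot : forall p q s, step (mkD (p ++ q) s) (mkD (q ++ p) s)
  | st_rename : forall w s s' (f : nat -> nat),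
      (forall x y, f x = f y -> x = y) -> (forall c, s' (f c) = s c) ->
      step (mkD w s) (mkD (map (rename f) w) s')
  (* signs of labels not occurring are irrelevant *)
  | st_sgn : forall w s s',
      (forall c, In c (overs w) -> s c = s' c) -> step (mkD w s) (mkD w s')
  | st_R1a : forall p q a s,
      step (mkD (p ++ q) s) (mkD (p ++ [Over a; Under a] ++ q) s)
  | st_R1b : forall p q a s,
      step (mkD (p ++ q) s) (mkD (p ++ [Under a; Over a] ++ q) s)
  (* R2 (strands parallel / antiparallel) *)
  | st_R2a : forall p q r a b s, s a <> s b ->
      step (mkD (p ++ [Over a; Over b] ++ q ++ [Under a; Under b] ++ r) s)
           (mkD (p ++ q ++ r) s)
  | st_R2b : forall p q r a b s, s a <> s b ->
      step (mkD (p ++ [Over a; Over b] ++ q ++ [Under b; Under a] ++ r) s)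
           (mkD (p ++ q ++ r) s)
  (* R3 (all oriented versions) *)
  | st_R3a : forall p q r t a b c oa ob oc s sg,
      heights_ok oa ob oc -> (sg = 1 \/ sg = -1) ->
      step (mkD (p ++ strand1 s a b c oa ob oc sg ++ q ++
                 strand2 s a b c oa ob oc sg ++ r ++
                 strand3 s a b c oa ob oc sg ++ t) s)
           (mkD (p ++ strand1 s a b c oa ob oc (- sg) ++ q ++
                 strand2 s a b c oa ob oc (- sg) ++ r ++
                 strand3 s a b c oa ob oc (- sg) ++ t) s)
  | st_R3b : forall p q r t a b c oa ob oc s sg,
      heights_ok oa ob oc -> (sg = 1 \/ sg = -1) ->
      step (mkD (p ++ strand1 s a b c oa ob oc sg ++ q ++
                 strand3 s a b c oa ob oc sg ++ r ++
                 strand2 s a b c oa ob oc sg ++ t) s)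
           (mkD (p ++ strand1 s a b c oa ob oc (- sg) ++ q ++
                 strand3 s a b c oa ob oc (- sg) ++ r ++
                 strand2 s a b c oa ob oc (- sg) ++ t) s)
  | st_T2 : forall p q s,
      step (mkD (p ++ [Bar; Bar] ++ q) s) (mkD (p ++ q) s)
  (* Omega_3^t : over/under exchanged at c (chord reversed, writhe kept),
     a bar on each of the four adjacent semiarcs *)
  | st_T3 : forall p q r a s,
      step (mkD (p ++ [Over a] ++ q ++ [Under a] ++ r) s)
           (mkD (p ++ [Bar; Under a; Bar] ++ q ++ [Bar; Over a; Bar] ++ r) s).

Definition tw_step (D D' : diagram) : Prop := wf D /\ wf D' /\ step D D'.
Definition tw_equiv : diagram -> diagram -> Prop := clos_refl_sym_trans diagram tw_step.

(* Colors propagate along the Gauss word: a bar acts by x |-> -x, a passage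
   over (under) a crossing of sign e by x |-> x - e (x + e).  With an odd
   number of bars the transport once around the knot is x |-> t - x with t
   even, since the passages come in pairs, so the coloring exists, is unique,
   and is read off the fixed point t / 2; Ind c is the difference of the
   colors just before the over- and the under-passage of c, shifted by w(c).
   Every move replaces sub-words by sub-words with the same transport
   (for Omega_3^t: bar, under, bar acts like over), so all other colors stay
   the same.  The crossings a move creates contribute nothing (an R1 crossing
   has index 0, the two R2 crossings have equal indices and opposite writhes)
   and the crossings it modifies (R3, Omega_3^t) keep their indices. *)

From Stdlib Require Import ZArith List Lia Permutation ClassicalEpsilon.
Import ListNotations.
Open Scope Z_scope.

Definition act (s : nat -> bool) (e : event) (x : Z) : Z :=
  match e with Bar => - x | Over c => x - zsg (s c) | Under c => x + zsg (s c) end.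

Fixpoint transport (s : nat -> bool) (w : list event) (x : Z) : Z :=
  match w with [] => x | e :: u => transport s u (act s e x) end.

Lemma transport_app s u v x : transport s (u ++ v) x = transport s v (transport s u x).
Proof. revert x; induction u; cbn; auto. Qed.

Definition isBar (e : event) : bool := match e with Bar => true | _ => false end.
Definition bar_count (w : list event) : nat := length (filter isBar w).

Lemma bar_count_app u v : bar_count (u ++ v) = (bar_count u + bar_count v)%nat.
Proof. unfold bar_count. rewrite filter_app, length_app. reflexivity. Qed.

Lemma transport_affine s w x :
  transport s w x = (if Nat.odd (bar_count w) then - x else x) + transport s w 0.
Proof.
  revert x; induction w as [|e w IH]; intros x; cbn [transport]; [now destruct x|].
  rewrite (IH (act s e x)), (IH (act s e 0)).
  destruct e; cbn [act bar_count filter isBar length];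
    rewrite ?Nat.odd_succ, <- ?Nat.negb_odd; destruct (Nat.odd _); cbn; lia.
Qed.

Definition passages (w : list event) : nat := (length (overs w) + length (unders w))%nat.

Lemma overs_cons e w :
  overs (e :: w) = match e with Over c => [c] | _ => [] end ++ overs w.
Proof. reflexivity. Qed.
Lemma unders_cons e w :
  unders (e :: w) = match e with Under c => [c] | _ => [] end ++ unders w.
Proof. reflexivity. Qed.
Lemma overs_app u v : overs (u ++ v) = overs u ++ overs v.
Proof. apply flat_map_app. Qed.
Lemma unders_app u v : unders (u ++ v) = unders u ++ unders v.
Proof. apply flat_map_app. Qed.

Lemma transport_parity s w x :
  exists k, transport s w x = x + Z.of_nat (passages w) + 2 * k.
Proof.
  revert x; induction w as [|e w IH]; intros x; cbn [transport].
  - exists 0; cbn; lia.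
  - destruct (IH (act s e x)) as [k ->].
    unfold passages; rewrite overs_cons, unders_cons.
    destruct e as [|c|c]; cbn [act app length]; unfold zsg.
    + exists (k - x); lia.
    + destruct (s c); [exists (k - 1) | exists k]; lia.
    + destruct (s c); [exists k | exists (k - 1)]; lia.
Qed.

Lemma wf_passages_even D : wf D -> exists m, passages (word D) = (2 * m)%nat.
Proof.
  intros [Ho [Hu Hou]].
  assert (Hp : Permutation (overs (word D)) (unders (word D))) by now apply NoDup_Permutation.
  exists (length (overs (word D))). unfold passages. rewrite (Permutation_length Hp). lia.
Qed.

Lemma transport_fixed_point_exists D : wf D -> Nat.odd (nbars D) = true ->
  exists x0, transport (pos D) (word D) x0 = x0.
Proof.
  intros Hw Hodd.
  destruct (wf_passages_even D Hw) as [m Hm].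
  destruct (transport_parity (pos D) (word D) 0) as [k Hk]. rewrite Hm in Hk.
  exists (Z.of_nat m + k).
  rewrite transport_affine. change (bar_count (word D)) with (nbars D). rewrite Hodd, Hk. lia.
Qed.

Lemma transport_fixed_point_unique s w x y : Nat.odd (bar_count w) = true ->
  transport s w x = x -> transport s w y = y -> x = y.
Proof. intros Hodd Hx Hy. rewrite transport_affine, Hodd in Hx, Hy. lia. Qed.

Lemma event_eqb_spec e f : event_eqb e f = true <-> e = f.
Proof.
  destruct e, f; cbn; split; intro H; try discriminate; auto;
    [apply Nat.eqb_eq in H; congruence | injection H as ->; apply Nat.eqb_refl
    |apply Nat.eqb_eq in H; congruence | injection H as ->; apply Nat.eqb_refl].
Qed.

Lemma event_eqb_refl e : event_eqb e e = true.
Proof. now apply event_eqb_spec. Qed.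

Definition event_eq_dec (e f : event) : {e = f} + {e <> f}.
Proof. decide equality; apply Nat.eq_dec. Defined.

Lemma idx_lt e w : In e w -> (idx e w < length w)%nat.
Proof.
  induction w as [|f w IH]; cbn; [tauto|]. intros [<-|H].
  - rewrite event_eqb_refl; lia.
  - destruct (event_eqb f e); [lia|]. specialize (IH H); lia.
Qed.

Lemma nth_idx e w d : In e w -> nth (idx e w) w d = e.
Proof.
  induction w as [|f w IH]; cbn; [tauto|]. intros [<-|H].
  - now rewrite event_eqb_refl.
  - destruct (event_eqb f e) eqn:E; [now apply event_eqb_spec | auto].
Qed.

Lemma In_overs c w : In c (overs w) <-> In (Over c) w.
Proof.
  unfold overs; rewrite in_flat_map; split.
  - intros [[|d|d] [He Hc]]; cbn in Hc; try tauto. now destruct Hc as [<-|[]].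
  - intros H; exists (Over c); cbn; auto.
Qed.

Lemma In_unders c w : In c (unders w) <-> In (Under c) w.
Proof.
  unfold unders; rewrite in_flat_map; split.
  - intros [[|d|d] [He Hc]]; cbn in Hc; try tauto. now destruct Hc as [<-|[]].
  - intros H; exists (Under c); cbn; auto.
Qed.

Lemma wf_In_under D c : wf D -> In c (overs (word D)) -> In (Under c) (word D).
Proof. intros (_ & _ & Hou) Hc. now apply In_unders, Hou. Qed.

Lemma prevseg_0 L : (0 < L)%nat -> prevseg L 0 = (L - 1)%nat.
Proof. intros HL; unfold prevseg; apply Nat.mod_small; lia. Qed.

Lemma prevseg_S L k : (S k < L)%nat -> prevseg L (S k) = k.
Proof.
  intros Hk; unfold prevseg.
  replace (S k + L - 1)%nat with (k + 1 * L)%nat by lia.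
  rewrite Nat.Div0.mod_add. apply Nat.mod_small; lia.
Qed.

Lemma firstn_S_nth_ev w k : (k < length w)%nat ->
  firstn (S k) w = firstn k w ++ [nth_ev w k].
Proof.
  revert k; induction w as [|e w IH]; intros [|k] Hk; cbn in *; try lia; auto.
  rewrite <- IH by lia. reflexivity.
Qed.

Lemma odd_bars_nonempty D : Nat.odd (nbars D) = true -> (0 < length (word D))%nat.
Proof. unfold nbars. destruct (word D); cbn; [discriminate | lia]. Qed.

Definition follows_transport (D : diagram) (col : nat -> Z) : Prop :=
  forall k, (k < length (word D))%nat ->
    col k = act (pos D) (nth_ev (word D) k) (col (prevseg (length (word D)) k)).

Lemma coloring_follows_transport D col : wf D -> is_coloring D col -> follows_transport D col.
Proof.
  intros Hw [Hbar Hcross] k Hk.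
  assert (Hin : In (nth_ev (word D) k) (word D)) by now apply nth_In.
  destruct (nth_ev (word D) k) as [|c|c] eqn:E; cbn [act].
  - specialize (Hbar k Hk E); lia.
  - destruct (In_nth _ _ Bar (wf_In_under D c Hw (proj2 (In_overs _ _) Hin))) as [j [Hj Ej]].
    specialize (Hcross c k j Hk Hj E Ej). unfold zsg; destruct (pos D c); lia.
  - destruct Hw as (_ & _ & Hou).
    apply In_unders, Hou, In_overs in Hin.
    destruct (In_nth _ _ Bar Hin) as [i [Hi Ei]].
    specialize (Hcross c i k Hi Hk Ei E). unfold zsg; destruct (pos D c); lia.
Qed.

Lemma follows_transport_coloring D col : follows_transport D col -> is_coloring D col.
Proof.
  intros H; split.
  - intros k Hk E. specialize (H k Hk). rewrite E in H. cbn in H. lia.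
  - intros c i j Hi Hj Ei Ej.
    pose proof (H i Hi) as Hover; pose proof (H j Hj) as Hunder.
    rewrite Ei in Hover; rewrite Ej in Hunder; cbn [act] in Hover, Hunder.
    unfold zsg in *; destruct (pos D c); lia.
Qed.

Lemma follows_transport_eq D col : (0 < length (word D))%nat -> follows_transport D col ->
  forall k, (k < length (word D))%nat ->
    col k = transport (pos D) (firstn (S k) (word D)) (col (length (word D) - 1)%nat).
Proof.
  intros HL Hcol k; induction k as [|k IH]; intros Hk.
  - rewrite (Hcol 0%nat Hk), prevseg_0 by auto.
    now destruct (word D); cbn in *; [lia|].
  - rewrite (Hcol (S k) Hk), prevseg_S, IH, (firstn_S_nth_ev _ (S k)), transport_app by lia.
    reflexivity.
Qed.

Lemma the_coloring_transport D x0 : wf D -> Nat.odd (nbars D) = true ->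
  transport (pos D) (word D) x0 = x0 ->
  forall k, (k < length (word D))%nat ->
    the_coloring D k = transport (pos D) (firstn (S k) (word D)) x0.
Proof.
  intros Hw Hodd Hx0.
  pose proof (odd_bars_nonempty D Hodd) as HL.
  assert (Hlast : forall y, transport (pos D) (firstn (S (length (word D) - 1)) (word D)) y =
                            transport (pos D) (word D) y).
  { intros y. replace (S (length (word D) - 1)) with (length (word D)) by lia.
    now rewrite firstn_all. }
  assert (Hcanonical : follows_transport D (fun k => transport (pos D) (firstn (S k) (word D)) x0)).
  { intros [|k] Hk.
    - rewrite prevseg_0, Hlast, Hx0 by lia. now destruct (word D).
    - rewrite prevseg_S, (firstn_S_nth_ev _ (S k)), transport_app by lia. reflexivity. }
  assert (Hcol : is_coloring D (the_coloring D)).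
  { unfold the_coloring. apply epsilon_spec.
    eexists. exact (follows_transport_coloring D _ Hcanonical). }
  pose proof (follows_transport_eq D _ HL (coloring_follows_transport D _ Hw Hcol)) as Heq.
  assert (Hy : the_coloring D (length (word D) - 1)%nat = x0).
  { apply (transport_fixed_point_unique (pos D) (word D)); auto.
    rewrite <- Hlast, <- Heq by lia. reflexivity. }
  intros k Hk. rewrite Heq, Hy by lia. reflexivity.
Qed.

Lemma the_coloring_prevseg D x0 : wf D -> Nat.odd (nbars D) = true ->
  transport (pos D) (word D) x0 = x0 ->
  forall k, (k < length (word D))%nat ->
    the_coloring D (prevseg (length (word D)) k) = transport (pos D) (firstn k (word D)) x0.
Proof.
  intros Hw Hodd Hx0 [|k] Hk.
  - rewrite prevseg_0, (the_coloring_transport D x0) by (auto; lia).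
    replace (S (length (word D) - 1)) with (length (word D)) by lia.
    now rewrite firstn_all, Hx0.
  - rewrite prevseg_S by lia. apply the_coloring_transport; auto; lia.
Qed.

Definition color_before (s : nat -> bool) (w : list event) (x : Z) (e : event) : Z :=
  transport s (firstn (idx e w) w) x.

Definition index_at (s : nat -> bool) (w : list event) (x : Z) (c : nat) : Z :=
  color_before s w x (Over c) - color_before s w x (Under c) - zsg (s c).

Lemma Ind_index_at D x0 c : wf D -> Nat.odd (nbars D) = true ->
  transport (pos D) (word D) x0 = x0 -> In c (overs (word D)) ->
  Ind D c = index_at (pos D) (word D) x0 c.
Proof.
  intros Hw Hodd Hx0 Hc.
  assert (Hi : In (Over c) (word D)) by now apply In_overs.
  pose proof (wf_In_under D c Hw Hc) as Hj.
  pose proof (idx_lt _ _ Hi) as Hil. pose proof (idx_lt _ _ Hj) as Hjl.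
  unfold Ind, index_at, color_before; cbv zeta.
  rewrite !(the_coloring_prevseg D x0), !(the_coloring_transport D x0) by auto.
  rewrite !firstn_S_nth_ev, !transport_app by auto.
  unfold nth_ev; rewrite !nth_idx by auto. cbn.
  unfold zsg; destruct (pos D c); lia.
Qed.

Definition sumZ (l : list Z) : Z := fold_right Z.add 0 l.

Lemma sumZ_app l1 l2 : sumZ (l1 ++ l2) = sumZ l1 + sumZ l2.
Proof. induction l1 as [|z l1 IH]; cbn; [reflexivity|]. unfold sumZ in *; lia. Qed.

Lemma sumZ_perm_ext {A} (l l' : list A) f g : Permutation l l' ->
  (forall c, In c l -> f c = g c) -> sumZ (map f l) = sumZ (map g l').
Proof.
  intros Hp Hfg. rewrite (map_ext_in f g l Hfg).
  induction (Permutation_map g Hp); unfold sumZ in *; cbn; lia.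
Qed.

(* The second term accounts for the [- w(K)] in [a_ 0]. *)
Definition a_contrib (n i v : Z) : Z :=
  (if i =? n then v else 0) - (if n =? 0 then v else 0).

Lemma a_contrib_index_0 n v : a_contrib n 0 v = 0.
Proof. unfold a_contrib. rewrite Z.eqb_sym. destruct (n =? 0); lia. Qed.

Lemma a_contrib_opp n i v : a_contrib n i v + a_contrib n i (- v) = 0.
Proof. unfold a_contrib. destruct (i =? n), (n =? 0); lia. Qed.

Definition a_sum (n : Z) (s : nat -> bool) (w : list event) (x0 : Z) : Z :=
  sumZ (map (fun c => a_contrib n (index_at s w x0 c) (zsg (s c))) (overs w)).

Lemma a_eq_a_sum D x0 n : wf D -> Nat.odd (nbars D) = true ->
  transport (pos D) (word D) x0 = x0 -> a_ D n = a_sum n (pos D) (word D) x0.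
Proof.
  intros Hw Hodd Hx0. unfold a_, writhe, a_sum.
  enough (Hl : forall l, incl l (overs (word D)) ->
    fold_right Z.add 0 (map (fun c => if Ind D c =? n then wr D c else 0) l) -
    (if n =? 0 then fold_right Z.add 0 (map (wr D) l) else 0) =
    sumZ (map (fun c => a_contrib n (index_at (pos D) (word D) x0 c) (zsg (pos D c))) l))
    by apply Hl, incl_refl.
  induction l as [|c l IH]; intros Hsub; cbn.
  - destruct (n =? 0); reflexivity.
  - rewrite (Ind_index_at D x0 c) by (auto; apply Hsub; now left).
    unfold sumZ in IH; rewrite <- IH by (intros d Hd; apply Hsub; now right).
    unfold a_contrib, wr, zsg. destruct (n =? 0); lia.
Qed.

Lemma a_invariant_of_fixed_points D D' n :
  wf D -> wf D' -> Nat.odd (nbars D) = true -> Nat.odd (nbars D') = true ->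
  (forall x0, transport (pos D) (word D) x0 = x0 ->
     exists x0', transport (pos D') (word D') x0' = x0' /\
       a_sum n (pos D) (word D) x0 = a_sum n (pos D') (word D') x0') ->
  a_ D n = a_ D' n.
Proof.
  intros Hw Hw' Hodd Hodd' Hmatch.
  destruct (transport_fixed_point_exists D Hw Hodd) as [x0 Hx0].
  destruct (Hmatch x0 Hx0) as [x0' [Hx0' Hsum]].
  now rewrite (a_eq_a_sum D x0), (a_eq_a_sum D' x0').
Qed.

Lemma a_invariant_of_same_transport w w' s s' n :
  wf (mkD w s) -> wf (mkD w' s') ->
  Nat.odd (bar_count w) = true -> Nat.odd (bar_count w') = true ->
  (forall x, transport s w x = transport s' w' x) ->
  (forall x0, transport s w x0 = x0 -> a_sum n s w x0 = a_sum n s' w' x0) ->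
  a_ (mkD w s) n = a_ (mkD w' s') n.
Proof.
  intros Hw Hw' Hodd Hodd' Htr Hsum.
  apply a_invariant_of_fixed_points; [exact Hw | exact Hw' | exact Hodd | exact Hodd' |].
  intros x0 Hx0. exists x0. cbn [word pos]. rewrite <- Htr. auto.
Qed.

Definition nodup_passages (w : list event) : Prop := NoDup (overs w) /\ NoDup (unders w).

Lemma wf_nodup_passages D : wf D -> nodup_passages (word D).
Proof. now intros (Ho & Hu & _). Qed.

Lemma nodup_passages_split w u e v : nodup_passages w -> w = u ++ e :: v -> e <> Bar ->
  ~ In e u /\ ~ In e v.
Proof.
  intros [Ho Hu] -> He. destruct e as [|c|c]; [congruence| |].
  - rewrite overs_app, overs_cons in Ho. apply NoDup_remove_2 in Ho.
    rewrite in_app_iff, !In_overs in Ho. tauto.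
  - rewrite unders_app, unders_cons in Hu. apply NoDup_remove_2 in Hu.
    rewrite in_app_iff, !In_unders in Hu. tauto.
Qed.

Lemma color_before_cons s f u x e :
  color_before s (f :: u) x e = if event_eqb f e then x else color_before s u (act s f x) e.
Proof. unfold color_before; cbn. now destruct (event_eqb f e). Qed.

Lemma color_before_app_in s u v x e : In e u ->
  color_before s (u ++ v) x e = color_before s u x e.
Proof.
  revert x; induction u as [|f u IH]; intros x He; cbn in He; [tauto|].
  rewrite <- app_comm_cons, !color_before_cons.
  destruct (event_eqb f e) eqn:E; auto.
  apply IH. destruct He as [<-|He]; auto. now rewrite event_eqb_refl in E.
Qed.

Lemma color_before_app_notin s u v x e : ~ In e u ->
  color_before s (u ++ v) x e = color_before s v (transport s u x) e.
Proof.
  revert x; induction u as [|f u IH]; intros x He; auto.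
  rewrite <- app_comm_cons, color_before_cons.
  destruct (event_eqb f e) eqn:E.
  - apply event_eqb_spec in E. subst. cbn in He; tauto.
  - apply IH. cbn in He; tauto.
Qed.

Lemma color_before_at s w u e v x : nodup_passages w -> w = u ++ e :: v -> e <> Bar ->
  color_before s w x e = transport s u x.
Proof.
  intros Hw Hsplit He. destruct (nodup_passages_split _ _ _ _ Hw Hsplit He) as [Hu _].
  subst. rewrite color_before_app_notin, color_before_cons, event_eqb_refl by auto.
  reflexivity.
Qed.

Definition same_transport (s : nat -> bool) (X X' : list event) : Prop :=
  forall y, transport s X y = transport s X' y.

(* [Bs] records every replaced sub-word [X] together with its replacement [X']. *)
Inductive differ_in_blocks (s : nat -> bool) :
    list (list event) -> list event -> list event -> Prop :=
  | dib_nil : differ_in_blocks s [] [] []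
  | dib_cons e Bs u v :
      differ_in_blocks s Bs u v -> differ_in_blocks s Bs (e :: u) (e :: v)
  | dib_block X X' Bs u v : same_transport s X X' ->
      differ_in_blocks s Bs u v -> differ_in_blocks s (X :: X' :: Bs) (X ++ u) (X' ++ v).

Lemma dib_refl s u : differ_in_blocks s [] u u.
Proof. induction u; now constructor. Qed.

Lemma dib_app s p Bs u v :
  differ_in_blocks s Bs u v -> differ_in_blocks s Bs (p ++ u) (p ++ v).
Proof. intros H; induction p; cbn; auto using dib_cons. Qed.

Lemma transport_blocks s Bs w w' :
  differ_in_blocks s Bs w w' -> same_transport s w w'.
Proof.
  induction 1 as [|e Bs u v _ IH|X X' Bs u v HX _ IH]; intros y; cbn; auto.
  now rewrite !transport_app, HX.
Qed.

Lemma color_before_blocks s Bs w w' e : differ_in_blocks s Bs w w' ->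
  (forall X, In X Bs -> ~ In e X) ->
  forall x, color_before s w x e = color_before s w' x e.
Proof.
  induction 1 as [|f Bs u v _ IH|X X' Bs u v HX _ IH]; intros Hout x; auto.
  - rewrite !color_before_cons. destruct (event_eqb f e); auto.
  - rewrite !color_before_app_notin by (apply Hout; cbn; auto).
    rewrite HX. apply IH. intros Y HY; apply Hout; cbn; auto.
Qed.

Definition avoids (c : nat) (X : list event) : Prop := ~ In (Over c) X /\ ~ In (Under c) X.

Lemma index_at_blocks s Bs w w' c : differ_in_blocks s Bs w w' ->
  (forall X, In X Bs -> avoids c X) ->
  forall x, index_at s w x c = index_at s w' x c.
Proof.
  intros Hd Hout x. unfold index_at.
  rewrite !(color_before_blocks s Bs w w') by (auto; intros X HX; apply Hout, HX).
  reflexivity.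
Qed.

Lemma a_invariant_of_blocks s Bs w w' moved n :
  wf (mkD w s) -> wf (mkD w' s) ->
  Nat.odd (bar_count w) = true -> Nat.odd (bar_count w') = true ->
  differ_in_blocks s Bs w w' -> Permutation (overs w) (overs w') ->
  (forall c, ~ In c moved -> forall X, In X Bs -> avoids c X) ->
  (forall c x0, In c moved -> transport s w x0 = x0 ->
     index_at s w x0 c = index_at s w' x0 c) ->
  a_ (mkD w s) n = a_ (mkD w' s) n.
Proof.
  intros Hw Hw' Hodd Hodd' Hd Hperm Hout Hmoved.
  apply a_invariant_of_same_transport; auto.
  - exact (transport_blocks s Bs w w' Hd).
  - intros x0 Hx0. apply sumZ_perm_ext; auto. intros c _.
    destruct (in_dec Nat.eq_dec c moved) as [Hc|Hc].
    + now rewrite Hmoved.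
    + now rewrite (index_at_blocks s Bs w w' c Hd (Hout c Hc)).
Qed.

Lemma avoids_nil c : avoids c [].
Proof. split; cbn; tauto. Qed.

Lemma a_T2 p q s n :
  wf (mkD (p ++ [Bar; Bar] ++ q) s) -> wf (mkD (p ++ q) s) ->
  Nat.odd (bar_count (p ++ [Bar; Bar] ++ q)) = true -> Nat.odd (bar_count (p ++ q)) = true ->
  a_ (mkD (p ++ [Bar; Bar] ++ q) s) n = a_ (mkD (p ++ q) s) n.
Proof.
  intros Hw Hw' Hodd Hodd'.
  assert (HX : same_transport s [Bar; Bar] []) by (intros y; cbn; lia).
  apply (a_invariant_of_blocks s [[Bar; Bar]; []] _ _ []); auto.
  - exact (dib_app _ _ _ _ _ (dib_block _ _ _ _ _ _ HX (dib_refl s q))).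
  - now rewrite !overs_app.
  - intros c _ X [<-|[<-|[]]]; [|apply avoids_nil]. split; cbn; intuition discriminate.
  - intros c x0 [].
Qed.

Lemma a_T3 p q r a s n :
  wf (mkD (p ++ [Over a] ++ q ++ [Under a] ++ r) s) ->
  wf (mkD (p ++ [Bar; Under a; Bar] ++ q ++ [Bar; Over a; Bar] ++ r) s) ->
  Nat.odd (bar_count (p ++ [Over a] ++ q ++ [Under a] ++ r)) = true ->
  Nat.odd (bar_count (p ++ [Bar; Under a; Bar] ++ q ++ [Bar; Over a; Bar] ++ r)) = true ->
  a_ (mkD (p ++ [Over a] ++ q ++ [Under a] ++ r) s) n =
  a_ (mkD (p ++ [Bar; Under a; Bar] ++ q ++ [Bar; Over a; Bar] ++ r) s) n.
Proof.
  intros Hw Hw' Hodd Hodd'.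
  assert (HX1 : same_transport s [Over a] [Bar; Under a; Bar]) by (intros y; cbn; lia).
  assert (HX2 : same_transport s [Under a] [Bar; Over a; Bar]) by (intros y; cbn; lia).
  pose proof (wf_nodup_passages _ Hw) as Hnd; pose proof (wf_nodup_passages _ Hw') as Hnd'.
  cbn [word] in Hnd, Hnd'.
  apply (a_invariant_of_blocks s [[Over a]; [Bar; Under a; Bar]; [Under a]; [Bar; Over a; Bar]]
           _ _ [a]); auto.
  - apply dib_app, dib_block, dib_app, dib_block, dib_refl; auto.
  - rewrite !overs_app. simpl. apply Permutation_app_head, Permutation_middle.
  - intros c Hc X HX. assert (c <> a) by (intros ->; apply Hc; now left).
    repeat destruct HX as [<-|HX]; try contradiction; split; cbn; intuition congruence.
  - intros c x0 [<-|[]] _. unfold index_at.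
    rewrite (color_before_at s _ p (Over a) (q ++ [Under a] ++ r)),
      (color_before_at s _ (p ++ [Over a] ++ q) (Under a) r),
      (color_before_at s _ (p ++ [Bar; Under a; Bar] ++ q ++ [Bar]) (Over a) (Bar :: r)),
      (color_before_at s _ (p ++ [Bar]) (Under a) (Bar :: q ++ [Bar; Over a; Bar] ++ r))
      by (auto; try discriminate; now rewrite <- !app_assoc).
    rewrite !transport_app. cbn.
    replace (- (- transport s p x0 + zsg (s a))) with (transport s p x0 - zsg (s a)) by lia.
    lia.
Qed.

Lemma lt_ev_not_bar o c : lt_ev o c <> Bar.
Proof. now destruct o. Qed.

Lemma same_transport_pr s f g X Y : X <> Bar -> Y <> Bar ->
  same_transport s (pr f X Y) (pr g X Y).
Proof.
  intros HX HY y.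
  destruct f, g, X, Y; cbn; try reflexivity; try congruence; lia.
Qed.

Lemma overs_pr_perm f g X Y : Permutation (overs (pr f X Y)) (overs (pr g X Y)).
Proof. destruct f, g, X, Y; cbn; auto using perm_swap. Qed.

Lemma avoids_pr d f o1 c1 o2 c2 : d <> c1 -> d <> c2 ->
  avoids d (pr f (lt_ev o1 c1) (lt_ev o2 c2)).
Proof. intros H1 H2. destruct f, o1, o2; split; cbn; intuition congruence. Qed.

Lemma color_before_pr s w u f X Y v x :
  nodup_passages w -> w = u ++ pr f X Y ++ v -> X <> Bar -> Y <> Bar ->
  color_before s w x X = (if f then transport s u x else act s Y (transport s u x)) /\
  color_before s w x Y = (if f then act s X (transport s u x) else transport s u x).
Proof.
  intros Hw -> HX HY. destruct f; cbn; split.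
  - now apply (color_before_at s _ u X (Y :: v)).
  - rewrite (color_before_at s _ (u ++ [X]) Y v x), transport_app by (now rewrite <- ?app_assoc).
    reflexivity.
  - rewrite (color_before_at s _ (u ++ [Y]) X v x), transport_app by (now rewrite <- ?app_assoc).
    reflexivity.
  - now apply (color_before_at s _ u Y (X :: v)).
Qed.

(* The index of each of the three crossings of an R3 configuration only
   depends on the colors [transport s u_i x0] with which the three strands
   enter the configuration; the order conventions of [strand1], [strand2],
   [strand3] make it independent of the side bit [sg], which is checked case
   by case.  No assumption on the heights ([heights_ok]) is needed. *)
Lemma index_at_R3 s a b c oa ob oc sg w w' x0 x0' u1 v1 u2 v2 u3 v3
    u1' v1' u2' v2' u3' v3' d :
  (sg = 1 \/ sg = -1) -> nodup_passages w -> nodup_passages w' ->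
  w = u1 ++ strand1 s a b c oa ob oc sg ++ v1 ->
  w = u2 ++ strand2 s a b c oa ob oc sg ++ v2 ->
  w = u3 ++ strand3 s a b c oa ob oc sg ++ v3 ->
  w' = u1' ++ strand1 s a b c oa ob oc (- sg) ++ v1' ->
  w' = u2' ++ strand2 s a b c oa ob oc (- sg) ++ v2' ->
  w' = u3' ++ strand3 s a b c oa ob oc (- sg) ++ v3' ->
  transport s u1 x0 = transport s u1' x0' ->
  transport s u2 x0 = transport s u2' x0' ->
  transport s u3 x0 = transport s u3' x0' ->
  In d [a; b; c] -> index_at s w x0 d = index_at s w' x0' d.
Proof.
  intros Hsg Hw Hw' E1 E2 E3 E1' E2' E3' T1 T2 T3 Hd.
  unfold strand1, strand2, strand3 in *.
  repeat match goal with
  | E : w = ?u ++ pr _ _ _ ++ _ |- _ =>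
      destruct (color_before_pr s _ _ _ _ _ _ x0 Hw E (lt_ev_not_bar _ _) (lt_ev_not_bar _ _));
      clear E
  | E : w' = ?u ++ pr _ _ _ ++ _ |- _ =>
      destruct (color_before_pr s _ _ _ _ _ _ x0' Hw' E (lt_ev_not_bar _ _) (lt_ev_not_bar _ _));
      clear E
  end.
  rewrite <- T1, <- T2, <- T3 in *.
  generalize dependent (transport s u1 x0); generalize dependent (transport s u2 x0);
    generalize dependent (transport s u3 x0); intros.
  unfold index_at, o12 in *.
  destruct Hd as [<-|[<-|[<-|[]]]]; destruct oa, ob, oc; cbn [lt_ev negb act] in *;
    destruct (s a), (s b), (s c); destruct Hsg as [->| ->]; cbn in *; lia.
Qed.

Lemma a_R3a p q r t a b c oa ob oc s sg n : (sg = 1 \/ sg = -1) ->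
  let w := p ++ strand1 s a b c oa ob oc sg ++ q ++ strand2 s a b c oa ob oc sg ++ r ++
           strand3 s a b c oa ob oc sg ++ t in
  let w' := p ++ strand1 s a b c oa ob oc (- sg) ++ q ++ strand2 s a b c oa ob oc (- sg) ++ r ++
           strand3 s a b c oa ob oc (- sg) ++ t in
  wf (mkD w s) -> wf (mkD w' s) ->
  Nat.odd (bar_count w) = true -> Nat.odd (bar_count w') = true ->
  a_ (mkD w s) n = a_ (mkD w' s) n.
Proof.
  intros Hsg w w' Hw Hw' Hodd Hodd'.
  set (S1 := strand1 s a b c oa ob oc) in *; set (S2 := strand2 s a b c oa ob oc) in *;
    set (S3 := strand3 s a b c oa ob oc) in *.
  assert (HS1 : same_transport s (S1 sg) (S1 (- sg)))
    by (apply same_transport_pr; apply lt_ev_not_bar).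
  assert (HS2 : same_transport s (S2 sg) (S2 (- sg)))
    by (apply same_transport_pr; apply lt_ev_not_bar).
  assert (HS3 : same_transport s (S3 sg) (S3 (- sg)))
    by (apply same_transport_pr; apply lt_ev_not_bar).
  apply (a_invariant_of_blocks s [S1 sg; S1 (- sg); S2 sg; S2 (- sg); S3 sg; S3 (- sg)]
           _ _ [a; b; c]); auto.
  - apply dib_app, dib_block, dib_app, dib_block, dib_app, dib_block, dib_refl; auto.
  - unfold w, w'. rewrite !overs_app.
    repeat apply Permutation_app; auto; apply overs_pr_perm.
  - intros d Hd X HX. cbn in Hd.
    repeat destruct HX as [<-|HX]; try contradiction; apply avoids_pr; intros ->; tauto.
  - intros d x0 Hd _.
    pose proof (wf_nodup_passages _ Hw); pose proof (wf_nodup_passages _ Hw').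
    eapply (index_at_R3 s a b c oa ob oc sg w w' x0 x0 p _ (p ++ S1 sg ++ q) _
              (p ++ S1 sg ++ q ++ S2 sg ++ r) _ p _ (p ++ S1 (- sg) ++ q) _
              (p ++ S1 (- sg) ++ q ++ S2 (- sg) ++ r));
      try (rewrite <- ?app_assoc; reflexivity);
      rewrite ?transport_app, ?HS1, ?HS2; auto.
Qed.

Lemma a_R3b p q r t a b c oa ob oc s sg n : (sg = 1 \/ sg = -1) ->
  let w := p ++ strand1 s a b c oa ob oc sg ++ q ++ strand3 s a b c oa ob oc sg ++ r ++
           strand2 s a b c oa ob oc sg ++ t in
  let w' := p ++ strand1 s a b c oa ob oc (- sg) ++ q ++ strand3 s a b c oa ob oc (- sg) ++ r ++
           strand2 s a b c oa ob oc (- sg) ++ t in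
  wf (mkD w s) -> wf (mkD w' s) ->
  Nat.odd (bar_count w) = true -> Nat.odd (bar_count w') = true ->
  a_ (mkD w s) n = a_ (mkD w' s) n.
Proof.
  intros Hsg w w' Hw Hw' Hodd Hodd'.
  set (S1 := strand1 s a b c oa ob oc) in *; set (S2 := strand2 s a b c oa ob oc) in *;
    set (S3 := strand3 s a b c oa ob oc) in *.
  assert (HS1 : same_transport s (S1 sg) (S1 (- sg)))
    by (apply same_transport_pr; apply lt_ev_not_bar).
  assert (HS2 : same_transport s (S2 sg) (S2 (- sg)))
    by (apply same_transport_pr; apply lt_ev_not_bar).
  assert (HS3 : same_transport s (S3 sg) (S3 (- sg)))
    by (apply same_transport_pr; apply lt_ev_not_bar).
  apply (a_invariant_of_blocks s [S1 sg; S1 (- sg); S3 sg; S3 (- sg); S2 sg; S2 (- sg)]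
           _ _ [a; b; c]); auto.
  - apply dib_app, dib_block, dib_app, dib_block, dib_app, dib_block, dib_refl; auto.
  - unfold w, w'. rewrite !overs_app.
    repeat apply Permutation_app; auto; apply overs_pr_perm.
  - intros d Hd X HX. cbn in Hd.
    repeat destruct HX as [<-|HX]; try contradiction; apply avoids_pr; intros ->; tauto.
  - intros d x0 Hd _.
    pose proof (wf_nodup_passages _ Hw); pose proof (wf_nodup_passages _ Hw').
    eapply (index_at_R3 s a b c oa ob oc sg w w' x0 x0 p _ (p ++ S1 sg ++ q ++ S3 sg ++ r) _
              (p ++ S1 sg ++ q) _ p _ (p ++ S1 (- sg) ++ q ++ S3 (- sg) ++ r) _
              (p ++ S1 (- sg) ++ q));
      try (rewrite <- ?app_assoc; reflexivity);
      rewrite ?transport_app, ?HS1, ?HS3; auto.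
Qed.

Lemma sumZ_map_insert {A} (f g : A -> Z) l1 extra l2 :
  (forall c, In c (l1 ++ l2) -> f c = g c) -> sumZ (map g extra) = 0 ->
  sumZ (map f (l1 ++ l2)) = sumZ (map g (l1 ++ extra ++ l2)).
Proof.
  intros Hfg Hextra. rewrite (map_ext_in f g _ Hfg), !map_app, !sumZ_app, Hextra. lia.
Qed.

Lemma a_R1 p q a s n X : (X = [Over a; Under a] \/ X = [Under a; Over a]) ->
  wf (mkD (p ++ q) s) -> wf (mkD (p ++ X ++ q) s) ->
  Nat.odd (bar_count (p ++ q)) = true -> Nat.odd (bar_count (p ++ X ++ q)) = true ->
  a_ (mkD (p ++ q) s) n = a_ (mkD (p ++ X ++ q) s) n.
Proof.
  intros HX Hw Hw' Hodd Hodd'.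
  assert (HXt : same_transport s X []) by (intros y; destruct HX as [-> | ->]; cbn; lia).
  assert (Hd : differ_in_blocks s [X; []] (p ++ X ++ q) (p ++ q))
    by exact (dib_app _ _ _ _ _ (dib_block _ _ _ _ _ _ HXt (dib_refl s q))).
  assert (Hovers : overs (p ++ X ++ q) = overs p ++ [a] ++ overs q)
    by (destruct HX as [-> | ->]; now rewrite !overs_app).
  pose proof (wf_nodup_passages _ Hw') as Hnd; cbn [word] in Hnd.
  assert (Ha : ~ In a (overs p ++ overs q)).
  { destruct Hnd as [Hnd _]. rewrite Hovers in Hnd. now apply NoDup_remove_2 in Hnd. }
  apply a_invariant_of_same_transport; auto.
  - intros x. symmetry. apply (transport_blocks _ _ _ _ Hd).
  - intros x0 _. unfold a_sum. rewrite Hovers, overs_app.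
    apply sumZ_map_insert.
    + intros c Hc. rewrite (index_at_blocks _ _ _ _ c Hd); auto.
      assert (c <> a) by (intros ->; contradiction).
      intros Y [<-|[<-|[]]]; [|apply avoids_nil].
      destruct HX as [-> | ->]; split; cbn; intuition congruence.
    + enough (Hloop : index_at s (p ++ X ++ q) x0 a = 0)
        by (cbn [map]; rewrite Hloop, a_contrib_index_0; reflexivity).
      unfold index_at.
      destruct HX as [-> | ->].
      * rewrite (color_before_at s _ p (Over a) (Under a :: q)),
          (color_before_at s _ (p ++ [Over a]) (Under a) q), transport_app
          by (auto; try discriminate; now rewrite <- ?app_assoc).
        cbn; lia.
      * rewrite (color_before_at s _ p (Under a) (Over a :: q)),
          (color_before_at s _ (p ++ [Under a]) (Over a) q), transport_app
          by (auto; try discriminate; now rewrite <- ?app_assoc).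
        cbn; lia.
Qed.

Lemma a_R2 p q r a b s n X2 : s a <> s b ->
  (X2 = [Under a; Under b] \/ X2 = [Under b; Under a]) ->
  wf (mkD (p ++ [Over a; Over b] ++ q ++ X2 ++ r) s) -> wf (mkD (p ++ q ++ r) s) ->
  Nat.odd (bar_count (p ++ [Over a; Over b] ++ q ++ X2 ++ r)) = true ->
  Nat.odd (bar_count (p ++ q ++ r)) = true ->
  a_ (mkD (p ++ [Over a; Over b] ++ q ++ X2 ++ r) s) n = a_ (mkD (p ++ q ++ r) s) n.
Proof.
  intros Hs HX Hw Hw' Hodd Hodd'.
  assert (Hopp : zsg (s b) = - zsg (s a)) by (unfold zsg; destruct (s a), (s b); congruence || lia).
  assert (HX1t : same_transport s [Over a; Over b] []) by (intros y; cbn; lia).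
  assert (HX2t : same_transport s X2 []) by (intros y; destruct HX as [-> | ->]; cbn; lia).
  assert (Hd : differ_in_blocks s [[Over a; Over b]; []; X2; []]
                 (p ++ [Over a; Over b] ++ q ++ X2 ++ r) (p ++ q ++ r))
    by exact (dib_app _ _ _ _ _ (dib_block _ _ _ _ _ _ HX1t
                (dib_app _ _ _ _ _ (dib_block _ _ _ _ _ _ HX2t (dib_refl s r))))).
  assert (Hovers : overs (p ++ [Over a; Over b] ++ q ++ X2 ++ r) =
                   overs p ++ [a; b] ++ overs q ++ overs r)
    by (destruct HX as [-> | ->]; now rewrite !overs_app).
  pose proof (wf_nodup_passages _ Hw) as Hnd; cbn [word] in Hnd.
  assert (Hfresh : ~ In a (overs p ++ overs q ++ overs r) /\
                   ~ In b (overs p ++ overs q ++ overs r)).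
  { destruct Hnd as [Hnd _]. rewrite Hovers in Hnd.
    pose proof (NoDup_remove_2 _ _ _ Hnd) as Ha.
    apply NoDup_remove_1, NoDup_remove_2 in Hnd.
    rewrite !in_app_iff in *; cbn [In] in Ha; rewrite in_app_iff in Ha. tauto. }
  apply a_invariant_of_same_transport; auto.
  - exact (transport_blocks _ _ _ _ Hd).
  - intros x0 _. unfold a_sum. rewrite Hovers, !overs_app. symmetry. apply sumZ_map_insert.
    + intros c Hc. rewrite (index_at_blocks _ _ _ _ c Hd); auto.
      assert (c <> a /\ c <> b) as [Hca Hcb] by (split; intros ->; tauto).
      intros Y HY; repeat destruct HY as [<-|HY]; try contradiction; try apply avoids_nil;
        [|destruct HX as [-> | ->]]; split; cbn; intuition congruence.
    + enough (Hab : index_at s (p ++ [Over a; Over b] ++ q ++ X2 ++ r) x0 b =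
                    index_at s (p ++ [Over a; Over b] ++ q ++ X2 ++ r) x0 a)
        by (cbn [map]; rewrite Hab, Hopp; unfold sumZ; cbn [fold_right];
            rewrite Z.add_0_r; apply a_contrib_opp).
      unfold index_at.
      rewrite (color_before_at s _ p (Over a) (Over b :: q ++ X2 ++ r)),
        (color_before_at s _ (p ++ [Over a]) (Over b) (q ++ X2 ++ r))
        by (auto; try discriminate; now rewrite <- ?app_assoc).
      destruct HX as [-> | ->].
      * rewrite (color_before_at s _ (p ++ [Over a; Over b] ++ q) (Under a) (Under b :: r)),
          (color_before_at s _ (p ++ [Over a; Over b] ++ q ++ [Under a]) (Under b) r)
          by (auto; try discriminate; now rewrite <- ?app_assoc).
        rewrite !transport_app. cbn. lia.
      * rewrite (color_before_at s _ (p ++ [Over a; Over b] ++ q) (Under b) (Under a :: r)),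
          (color_before_at s _ (p ++ [Over a; Over b] ++ q ++ [Under b]) (Under a) r)
          by (auto; try discriminate; now rewrite <- ?app_assoc).
        rewrite !transport_app. cbn. lia.
Qed.

Lemma nodup_passages_app_notin p q e : nodup_passages (p ++ q) -> e <> Bar -> In e p -> ~ In e q.
Proof.
  intros Hw He Hp. destruct (in_split _ _ Hp) as (p1 & p2 & ->).
  rewrite <- app_assoc in Hw.
  destruct (nodup_passages_split _ _ _ _ Hw eq_refl He) as [_ Hq].
  rewrite in_app_iff in Hq. tauto.
Qed.

Lemma color_before_rot s p q x0 e : nodup_passages (p ++ q) -> e <> Bar -> In e (p ++ q) ->
  transport s (p ++ q) x0 = x0 ->
  color_before s (p ++ q) x0 e = color_before s (q ++ p) (transport s p x0) e.
Proof.
  intros Hw He Hin Hx0. destruct (in_dec event_eq_dec e p) as [Hp|Hp].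
  - rewrite color_before_app_in, color_before_app_notin
      by (auto; eapply nodup_passages_app_notin; eauto).
    now rewrite <- transport_app, Hx0.
  - assert (Hq : In e q) by (apply in_app_or in Hin; tauto).
    now rewrite color_before_app_notin, color_before_app_in.
Qed.

(* The rotated word carries the same coloring, read from the end of [p] on. *)
Lemma a_rot p q s n : wf (mkD (p ++ q) s) -> wf (mkD (q ++ p) s) ->
  Nat.odd (bar_count (p ++ q)) = true -> Nat.odd (bar_count (q ++ p)) = true ->
  a_ (mkD (p ++ q) s) n = a_ (mkD (q ++ p) s) n.
Proof.
  intros Hw Hw' Hodd Hodd'.
  apply a_invariant_of_fixed_points; [exact Hw | exact Hw' | exact Hodd | exact Hodd' |].
  cbn [word pos]. intros x0 Hx0. exists (transport s p x0). split.
  - now rewrite transport_app, <- (transport_app s p q), Hx0.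
  - unfold a_sum. apply sumZ_perm_ext; [rewrite !overs_app; apply Permutation_app_comm|].
    intros c Hc. unfold index_at.
    pose proof (wf_nodup_passages _ Hw) as Hnd; cbn [word] in Hnd.
    rewrite !(color_before_rot s p q x0); try discriminate; auto.
    + exact (wf_In_under _ c Hw Hc).
    + now apply In_overs.
Qed.

Lemma event_eqb_rename f e e' : (forall x y, f x = f y -> x = y) ->
  event_eqb (rename f e) (rename f e') = event_eqb e e'.
Proof.
  intros Hf. destruct e as [|c|c], e' as [|d|d]; cbn; auto;
    destruct (Nat.eqb_spec c d) as [->|Hcd];
    [apply Nat.eqb_refl | apply Nat.eqb_neq; intros Hfcd; now apply Hcd, Hf
    |apply Nat.eqb_refl | apply Nat.eqb_neq; intros Hfcd; now apply Hcd, Hf].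
Qed.

Lemma idx_rename f w e : (forall x y, f x = f y -> x = y) ->
  idx (rename f e) (map (rename f) w) = idx e w.
Proof.
  intros Hf; induction w as [|e' w IH]; cbn; auto.
  now rewrite event_eqb_rename, IH.
Qed.

Lemma transport_rename s s' f w x : (forall c, s' (f c) = s c) ->
  transport s' (map (rename f) w) x = transport s w x.
Proof.
  intros Hs; revert x; induction w as [|e w IH]; intros x; cbn; auto.
  rewrite <- IH. f_equal. destruct e; cbn; now rewrite ?Hs.
Qed.

Lemma color_before_rename s s' f w x e : (forall x y, f x = f y -> x = y) ->
  (forall c, s' (f c) = s c) ->
  color_before s' (map (rename f) w) x (rename f e) = color_before s w x e.
Proof.
  intros Hf Hs. unfold color_before. rewrite idx_rename, firstn_map by auto.
  now apply transport_rename.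
Qed.

Lemma overs_rename f w : overs (map (rename f) w) = map f (overs w).
Proof.
  induction w as [|e w IH]; cbn [map]; auto.
  rewrite !overs_cons, IH. now destruct e.
Qed.

Lemma a_rename w s s' f n : (forall x y, f x = f y -> x = y) -> (forall c, s' (f c) = s c) ->
  wf (mkD w s) -> wf (mkD (map (rename f) w) s') ->
  Nat.odd (bar_count w) = true -> Nat.odd (bar_count (map (rename f) w)) = true ->
  a_ (mkD w s) n = a_ (mkD (map (rename f) w) s') n.
Proof.
  intros Hf Hs Hw Hw' Hodd Hodd'.
  apply a_invariant_of_same_transport; auto.
  - intros x. symmetry. now apply transport_rename.
  - intros x0 _. unfold a_sum. rewrite overs_rename, map_map. f_equal.
    apply map_ext. intros c. unfold index_at. rewrite Hs.
    change (Over (f c)) with (rename f (Over c)). change (Under (f c)) with (rename f (Under c)).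
    now rewrite !(color_before_rename s s' f).
Qed.

Lemma transport_ext s s' u x : (forall c, In (Over c) u \/ In (Under c) u -> s c = s' c) ->
  transport s u x = transport s' u x.
Proof.
  revert x; induction u as [|e u IH]; intros x Hs; cbn; auto.
  replace (act s e x) with (act s' e x) by (destruct e; cbn; rewrite ?(Hs c); cbn; auto).
  apply IH. intros c Hc. apply Hs. cbn; tauto.
Qed.

Lemma a_sgn w s s' n : (forall c, In c (overs w) -> s c = s' c) ->
  wf (mkD w s) -> wf (mkD w s') ->
  Nat.odd (bar_count w) = true -> a_ (mkD w s) n = a_ (mkD w s') n.
Proof.
  intros Hs Hw Hw' Hodd.
  assert (Hpass : forall u, incl u w -> forall c, In (Over c) u \/ In (Under c) u -> s c = s' c).
  { intros u Hu c [Hc|Hc]; apply Hs, In_overs.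
    - now apply Hu.
    - destruct Hw as (_ & _ & Hou). now apply In_overs, Hou, In_unders, Hu. }
  apply a_invariant_of_same_transport; auto.
  - intros x. apply transport_ext, Hpass, incl_refl.
  - intros x0 _. unfold a_sum. f_equal. apply map_ext_in. intros c Hc.
    assert (Hfirstn : forall k, incl (firstn k w) w)
      by (intros k d Hd; rewrite <- (firstn_skipn k w); apply in_or_app; now left).
    unfold index_at, color_before.
    rewrite (Hs c Hc), !(transport_ext s s' (firstn _ w)) by now apply Hpass.
    reflexivity.
Qed.

Lemma odd_bar_count_app u v :
  Nat.odd (bar_count (u ++ v)) = xorb (Nat.odd (bar_count u)) (Nat.odd (bar_count v)).
Proof. now rewrite bar_count_app, Nat.odd_add. Qed.

Lemma bar_count_rename f w : bar_count (map (rename f) w) = bar_count w.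
Proof. induction w as [|[] w IH]; cbn; auto. Qed.

Lemma bar_count_pr f o1 c1 o2 c2 : bar_count (pr f (lt_ev o1 c1) (lt_ev o2 c2)) = 0%nat.
Proof. now destruct f, o1, o2. Qed.

Lemma step_bar_parity D D' : step D D' -> Nat.odd (nbars D) = Nat.odd (nbars D').
Proof.
  destruct 1; change (nbars (mkD ?w _)) with (bar_count w);
    unfold strand1, strand2, strand3; rewrite ?odd_bar_count_app, ?bar_count_pr, ?bar_count_rename;
    [apply Bool.xorb_comm | cbn; reflexivity ..].
Qed.

Lemma tw_step_a_invariant D D' n : tw_step D D' -> Nat.odd (nbars D) = true -> a_ D n = a_ D' n.
Proof.
  intros (Hw & Hw' & Hs) Hodd.
  assert (Hodd' : Nat.odd (nbars D') = true) by now rewrite <- (step_bar_parity _ _ Hs).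
  destruct Hs.
  - now apply a_rot.
  - now apply a_rename.
  - now apply a_sgn.
  - apply (a_R1 p q a s n [Over a; Under a]); auto.
  - apply (a_R1 p q a s n [Under a; Over a]); auto.
  - apply a_R2; auto.
  - apply a_R2; auto.
  - now apply a_R3a.
  - now apply a_R3b.
  - now apply a_T2.
  - now apply a_T3.
Qed.

Lemma tw_equiv_bar_parity K K' : tw_equiv K K' -> Nat.odd (nbars K) = Nat.odd (nbars K').
Proof.
  induction 1 as [D D' (_ & _ & Hs) | | |]; try congruence.
  now apply step_bar_parity.
Qed.

Lemma tw_equiv_a_invariant K K' n : tw_equiv K K' -> Nat.odd (nbars K) = true ->
  a_ K n = a_ K' n.
Proof.
  induction 1 as [D D' Hs | D | D D' Heq IH | D D' D'' Heq IH Heq' IH']; intros Hodd.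
  - now apply tw_step_a_invariant.
  - reflexivity.
  - symmetry. apply IH. now rewrite (tw_equiv_bar_parity _ _ Heq).
  - rewrite IH by assumption. apply IH'. now rewrite <- (tw_equiv_bar_parity _ _ Heq).
Qed.

Theorem theorem7p4 (K K' : diagram) :
  wf K -> Nat.odd (nbars K) = true -> tw_equiv K K' ->
  forall n : Z, a_ K n = a_ K' n.
Proof.
  (* well-formedness of [K] is already part of every [tw_step] *)
  intros _ Hodd Heq n.
  exact (tw_equiv_a_invariant K K' n Heq Hodd).
Qed.
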